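(* Consider the homophily variant of the diffusion model described in the context, with homophily parameter $\gamma\in(0,1/s)$. Then: (i) For every $t\ge1$ there is $\underline H_t\in\mathbb R\cup\{-\infty\}$ with $D_n^t=\{i:H_i>\underline H_t\}$, and the thresholds can be chosen weakly decreasing in $t$. (ii) Let $0<\gamma<\gamma'<1/s$, and let $D_n^t(\gamma)$ and $D_n^t(\gamma')$ be the sets of new-product consumers under $\gamma$ and $\gamma'$ respectively, with all other parameters equal. Then $D_n^t(\gamma')\subseteq D_n^t(\gamma)$ for all $t\ge1$ (equivalently $\underline H_t$ is weakly increasing in $\gamma$ for $t\ge 2$). In words, stronger homophily slows diffusion.
   Context: Homophily variant. There are $N$ individuals partitioned into $G\ge2$ groups $N_1,\dots,N_G$, each of size $N/G$. Members of $N_k$ have aspiration level $H_{N_k}$, with $H_{N_1}>\cdots>H_{N_G}$; write $H_i$ for individual $i$'s level. The incumbent $p_c$ gives payoff $v_L$ to everyone, where $H_{N_2}<v_L<H_{N_1}$. The new product $p_n$ gives individual $i$ the payoff $v_{Hi}\ge H_{N_1}$. Product similarities are $s_{p_c,p_c}=s_{p_n,p_n}=1$, $s_{p_n,p_c}=s_p\in(0,1)$ and $s_{p_c,p_n}=0$. Individual similarities: $s_{i,i}=1$; $s_{i,j}=\gamma s$ if $i\ne j$ and $i,j$ lie in the same group; $s_{i,j}=s$ otherwise. Here $s\in(0,1]$ and $\gamma\in(0,1/s)$. Dynamics. In period $0$ everyone consumes $p_c$ ($D_c^0=\{1,\dots,N\}$, $D_n^0=\emptyset$). For $t\ge1$,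 $U_i^t(p_c)=\sum_{t'=0}^{t-1}\sum_{j\in D_c^{t'}}s_{i,j}(v_L-H_i)$ and $U_i^t(p_n)=s_pU_i^t(p_c)+\sum_{t'=0}^{t-1}\sum_{j\in D_n^{t'}}s_{i,j}(v_{Hj}-H_i)$. Individual $i\in D_n^t$ iff $U_i^t(p_n)>U_i^t(p_c)$; otherwise $i\in D_c^t$. *)

From HB Require Import structures.
From mathcomp Require Import all_boot all_order all_algebra.
From mathcomp Require Import reals constructive_ereal.
Set Implicit Arguments. Unset Strict Implicit. Unset Printing Implicit Defensive.
Import Order.TTheory GRing.Theory Num.Theory.
Local Open Scope ring_scope.

(* Individuals are pairs (k, m): k : 'I_G is the group, m : 'I_M the index
   inside the group; so N = G * M and each group has size M = N / G. *)
Definition indiv (G M : nat) := ('I_G * 'I_M)%type.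

Section Diffusion.
Variables (R : realType) (G M : nat).
(* H k = aspiration level of group N_{k+1}; vL = incumbent payoff;
   vH i = new-product payoff of individual i; sp = s_{p_n,p_c};
   s = cross-group similarity; gamma = homophily parameter. *)
Variables (H : 'I_G -> R) (vL : R) (vH : indiv G M -> R) (sp s gamma : R).

Definition sim (i j : indiv G M) : R :=
  if i == j then 1 else if i.1 == j.1 then gamma * s else s.

Definition Hi (i : indiv G M) : R := H i.1.

(* Given the history h = [:: D_n^0; ...; D_n^{t-1}] (with D_c^{t'} the
   complement of D_n^{t'}), the utilities U_i^t(p_c) and U_i^t(p_n). *)
Definition Uc (h : seq {set indiv G M}) (i : indiv G M) : R :=
  \sum_(D <- h) \sum_(j in ~: D) sim i j * (vL - Hi i).

Definition Un (h : seq {set indiv G M}) (i : indiv G M) : R :=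
  sp * Uc h i + \sum_(D <- h) \sum_(j in D) sim i j * (vH j - Hi i).

Definition next_adopters (h : seq {set indiv G M}) : {set indiv G M} :=
  [set i | Uc h i < Un h i].

Fixpoint hist (t : nat) : seq {set indiv G M} :=
  match t with
  | 0 => [:: set0]
  | t'.+1 => rcons (hist t') (next_adopters (hist t'))
  end.

Definition Dn (t : nat) : {set indiv G M} := last set0 (hist t).

End Diffusion.

(* Write U_i^t(p_n) - U_i^t(p_c) as a sum over past periods of a one-period
   gain.  For an individual outside the top group a neighbour consuming p_n
   contributes s_{i,j}(v_Hj - H_i) >= 0 and one consuming p_c contributes
   (s_p - 1) s_{i,j}(v_L - H_i) <= 0, so the gain is monotone in the set of
   adopters; since the top group adopts from period 1 on, the adopter sets grow
   over time.  If every past adopter lies in a strictly higher group than i,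
   each has similarity s to i and the gain is an affine function of H_i that is
   nonnegative at v_L; positivity at some H_i therefore propagates to every
   larger aspiration below v_L, so adopters always form an upper set of
   aspirations, i.e. are given by a threshold.  In that situation gamma only
   enters through the total similarity of i to non-adopters, which grows with
   gamma and carries the negative weight (s_p - 1)(v_L - H_i): stronger
   homophily lowers every gain of a prospective adopter. *)

From HB Require Import structures.
From mathcomp Require Import all_boot all_order all_algebra.
From mathcomp Require Import reals constructive_ereal.
From mathcomp Require Import ring lra.
Set Implicit Arguments. Unset Strict Implicit. Unset Printing Implicit Defensive.
Import Order.TTheory GRing.Theory Num.Theory.
Local Open Scope ring_scope.

Lemma affine_gt0_between (R : realDomainType) (a b x y z : R) :
  0 < a + b * x -> 0 <= a + b * z -> x <= y -> y < z -> 0 < a + b * y.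
Proof.
move=> ax_gt0 az_ge0 le_xy lt_yz.
have convex : (z - x) * (a + b * y) = (z - y) * (a + b * x) + (y - x) * (a + b * z).
  by ring.
nra.
Qed.

(* Group 0 has the highest aspiration, so a smaller group index means a higher
   aspiration level. *)
Definition upper_closed (G M : nat) (X : {set indiv G M}) :=
  forall i j : indiv G M, i \in X -> (val j.1 <= val i.1)%N -> j \in X.

Definition strictly_above (G M : nat) (X : {set indiv G M}) (x : indiv G M) :=
  forall l, l \in X -> (val l.1 < val x.1)%N.

Lemma upper_closed_above (G M : nat) (X : {set indiv G M}) x :
  upper_closed X -> x \notin X -> strictly_above X x.
Proof.
by move=> X_closed xX l lX; rewrite ltnNge; apply: contra xX; apply: X_closed.
Qed.

Section Diffusion.
Variables (R : realType) (G M : nat) (H : 'I_G -> R) (vL : R)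
  (vH : indiv G M -> R) (sp s : R).

Implicit Types (g c : R) (i j l : indiv G M) (X Y : {set indiv G M}).

Local Notation D g := (Dn H vL vH sp s g).

Definition gain (g : R) (i : indiv G M) (X : {set indiv G M}) : R :=
  \sum_j (if j \in X then sim s g i j * (vH j - Hi H i)
          else (sp - 1) * (sim s g i j * (vL - Hi H i))).

Lemma Un_sub_Uc g h i :
  Un H vL vH sp s g h i - Uc H vL s g h i = \sum_(X <- h) gain g i X.
Proof.
rewrite /Un /Uc addrAC -{2}[\sum_(X <- h) _]mul1r -mulrBl.
rewrite big_distrr -big_split /=; apply: eq_bigr => X _.
rewrite addrC /gain [RHS](bigID (fun j => j \in X)) /=; congr (_ + _).
  by apply: eq_bigr => j ->.
rewrite big_distrr /=; apply: eq_big => [j|j]; first by rewrite in_setC.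
by rewrite in_setC => /negbTE ->.
Qed.

Lemma histE g t : hist H vL vH sp s g t = map (D g) (iota 0 t.+1).
Proof.
elim: t => [//|t IH].
rewrite -addn1 (iotaD 0 t.+1 1) map_cat cats1 -IH addn1 /=; congr rcons.
by rewrite /Dn /= last_rcons.
Qed.

Lemma Dn0 g : D g 0 = set0.
Proof. by []. Qed.

Lemma mem_Dn_succ g t i :
  (i \in D g t.+1) = (0 < \sum_(u < t.+1) gain g i (D g u)).
Proof.
rewrite {1}/Dn /= last_rcons inE -subr_gt0 Un_sub_Uc histE big_map.
by rewrite -(big_mkord xpredT (fun u => gain g i (D g u))) /index_iota subn0.
Qed.

Definition sim_total (g : R) : R :=
  s *+ #|{: indiv G M}| + (g * s - s) *+ M + (1 - g * s).

Lemma sum_sim g i : \sum_j sim s g i j = sim_total g.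
Proof.
have simE j : sim s g i j = s + (if i.1 == j.1 then g * s - s else 0)
                              + (if i == j then 1 - g * s else 0).
  rewrite /sim; case: eqP => [<-|_]; first by rewrite eqxx; ring.
  by case: (i.1 == j.1); ring.
rewrite (eq_bigr _ (fun j _ => simE j)) !big_split /= sumr_const /sim_total.
congr (_ + _ + _).
  rewrite -(pair_big xpredT xpredT (fun k (_ : 'I_M) => if i.1 == k then g * s - s else 0)) /=.
  rewrite (bigD1 i.1) //= eqxx sumr_const card_ord big1 ?addr0 //.
  by move=> k /negbTE; rewrite eq_sym => ->; rewrite big1.
rewrite (bigD1 i) //= eqxx big1 ?addr0 //.
by move=> j /negbTE; rewrite eq_sym => ->.
Qed.

(* The gain of an individual with aspiration [c] from a period with adopters X,
   when every member of X lies in a strictly higher group (see gain_aboveE). *)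
Definition gain_above (g : R) (X : {set indiv G M}) (c : R) : R :=
  s * (\sum_(l in X) vH l) - s * #|X|%:R * c
  + (sp - 1) * (vL - c) * (sim_total g - s * #|X|%:R).

Lemma gain_aboveE g i X : strictly_above X i -> gain g i X = gain_above g X (Hi H i).
Proof.
move=> X_above.
have simX l : l \in X -> sim s g i l = s.
  move=> /X_above lt_li; rewrite /sim.
  have [eq_il|_] := eqVneq i l; first by rewrite eq_il ltnn in lt_li.
  by have [eq_il|] := eqVneq i.1 l.1; first by rewrite eq_il ltnn in lt_li.
have sumX : \sum_(l in X) sim s g i l = s * #|X|%:R.
  by rewrite (eq_bigr (fun _ => s)) ?sumr_const ?mulr_natr // => l /simX.
have sum_notin_X : \sum_(l | l \notin X) sim s g i l = sim_total g - s * #|X|%:R.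
  by rewrite -(sum_sim g i) [in RHS](bigID (fun l => l \in X)) /= sumX addrAC subrr add0r.
rewrite /gain (bigID (fun l => l \in X)) /= (eq_bigr (fun l => s * (vH l - Hi H i))); last first.
  by move=> l lX; rewrite lX simX.
rewrite [Z in _ + Z](eq_bigr (fun l => (sp - 1) * (vL - Hi H i) * sim s g i l)); last first.
  by move=> l /negbTE ->; ring.
rewrite -!big_distrr /= sum_notin_X sumrB sumr_const -mulr_natl /gain_above; ring.
Qed.

Lemma gain_above_affine g X c :
  gain_above g X c = gain_above g X 0 + (gain_above g X 1 - gain_above g X 0) * c.
Proof. by rewrite /gain_above; ring. Qed.

Hypothesis two_le_G : (2 <= G)%N.
Hypothesis H_decr : forall k l : 'I_G, (k < l)%N -> H l < H k.
Hypothesis H1_lt_vL : forall k : 'I_G, val k = 1%N -> H k < vL.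
Hypothesis vL_lt_H0 : forall k : 'I_G, val k = 0%N -> vL < H k.
Hypothesis H0_le_vH : forall (i : indiv G M) (k : 'I_G), val k = 0%N -> H k <= vH i.
Hypothesis sp_lt1 : sp < 1.
Hypothesis s_gt0 : 0 < s.

Let top : 'I_G := Ordinal (ltnW two_le_G).
Let second : 'I_G := Ordinal two_le_G.

Lemma Hi_le_group i j : (val j.1 <= val i.1)%N -> Hi H i <= Hi H j.
Proof.
rewrite leq_eqVlt => /orP [/eqP eq_ij|lt_ji]; last exact/ltW/H_decr.
by rewrite /Hi; have -> : j.1 = i.1 by apply: val_inj.
Qed.

Lemma Hi_le_vH i j : Hi H i <= vH j.
Proof.
exact: le_trans (@Hi_le_group i (top, j.2) (leq0n _)) (@H0_le_vH j top erefl).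
Qed.

Lemma vL_lt_vH j : vL < vH j.
Proof. exact: lt_le_trans (@vL_lt_H0 top erefl) (@H0_le_vH j top erefl). Qed.

Lemma Hi_lt_vL i : val i.1 != 0%N -> Hi H i < vL.
Proof.
move=> i_low; apply: le_lt_trans (@H1_lt_vL second erefl).
by apply: (@Hi_le_group i (second, i.2)); rewrite lt0n.
Qed.

Lemma sim_gt0 g i j : 0 < g -> 0 < sim s g i j.
Proof.
by move=> g_gt0; rewrite /sim; case: (i == j) => //; case: (_ == _) => //; apply: mulr_gt0.
Qed.

Lemma gain_above_vL_ge0 g X : 0 <= gain_above g X vL.
Proof.
rewrite /gain_above subrr mulr0 mul0r addr0 -mulrA -mulrBr.
apply: mulr_ge0; first exact: ltW.
rewrite subr_ge0 mulr_natl -sumr_const; apply: ler_sum => l _.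
exact/ltW/vL_lt_vH.
Qed.

Lemma sum_gain_above_affine (I : finType) g (F : I -> {set indiv G M}) c :
  \sum_u gain_above g (F u) c =
  \sum_u gain_above g (F u) 0 + (\sum_u (gain_above g (F u) 1 - gain_above g (F u) 0)) * c.
Proof.
rewrite big_distrl -big_split /=; apply: eq_bigr => u _; exact: gain_above_affine.
Qed.

Lemma gain_above_homophily g g' X c :
  (0 < M)%N -> g <= g' -> c <= vL -> gain_above g' X c <= gain_above g X c.
Proof.
move=> M_gt0 le_gg' c_le_vL; rewrite -subr_ge0.
have -> : gain_above g X c - gain_above g' X c =
          ((1 - sp) * (vL - c)) * ((g' - g) * s) * (M%:R - 1).
  by rewrite /gain_above /sim_total; ring.
by rewrite !mulr_ge0 ?subr_ge0 ?ler1n ?(ltW sp_lt1) ?(ltW s_gt0).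
Qed.

Section Gain.
Variable g : R.
Hypothesis g_gt0 : 0 < g.

Lemma subset_le_gain i X Y : Hi H i <= vL -> X \subset Y -> gain g i X <= gain g i Y.
Proof.
move=> i_le_vL subXY; apply: ler_sum => j _.
have sim_ij := sim_gt0 i j g_gt0; have vH_ge := Hi_le_vH i j.
have [jX|jX] := boolP (j \in X); first by rewrite (subsetP subXY _ jX).
case: (j \in Y) => //.
have loss_ge0 : 0 <= sim s g i j * (vL - Hi H i).
  by rewrite mulr_ge0 ?subr_ge0 ?(ltW sim_ij).
have win_ge0 : 0 <= sim s g i j * (vH j - Hi H i).
  by rewrite mulr_ge0 ?subr_ge0 ?(ltW sim_ij).
have := sp_lt1; nra.
Qed.

Lemma nonadopter_term_ge0_top i j :
  val i.1 = 0%N -> 0 <= (sp - 1) * (sim s g i j * (vL - Hi H i)).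
Proof.
move=> i_top; have sim_ij := sim_gt0 i j g_gt0; have vL_lt := vL_lt_H0 i_top.
have loss_le0 : 0 <= sim s g i j * (Hi H i - vL).
  by rewrite mulr_ge0 ?subr_ge0 ?(ltW sim_ij) ?(ltW vL_lt).
have := sp_lt1; nra.
Qed.

Lemma gain_ge0_top i X : val i.1 = 0%N -> 0 <= gain g i X.
Proof.
move=> i_top; apply: sumr_ge0 => j _.
case: (j \in X); last exact: nonadopter_term_ge0_top.
by rewrite mulr_ge0 ?subr_ge0 ?Hi_le_vH ?ltW ?sim_gt0.
Qed.

Lemma gain_set0_gt0_top i : val i.1 = 0%N -> 0 < gain g i set0.
Proof.
move=> i_top; rewrite /gain (bigD1 i) //= in_set0; apply: ltr_wpDr.
  by apply: sumr_ge0 => j _; rewrite in_set0; apply: nonadopter_term_ge0_top.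
have -> : sim s g i i = 1 by rewrite /sim eqxx.
have := sp_lt1; have := vL_lt_H0 i_top; rewrite -/(Hi H i); nra.
Qed.

Lemma mem_Dn_top t i : val i.1 = 0%N -> i \in D g t.+1.
Proof.
move=> i_top; rewrite mem_Dn_succ big_ord_recl Dn0; apply: ltr_wpDr.
  by apply: sumr_ge0 => u _; apply: gain_ge0_top.
exact: gain_set0_gt0_top.
Qed.

Lemma Dn_subset_succ t :
  (forall u, (u <= t)%N -> D g u \subset D g t) -> D g t \subset D g t.+1.
Proof.
case: t => [_|t Dt_max]; first by rewrite Dn0 sub0set.
apply/subsetP => i; have [i_top _|i_low] := eqVneq (val i.1) 0%N.
  exact: mem_Dn_top.
rewrite (mem_Dn_succ g t.+1) big_ord_recr /= mem_Dn_succ => past_gt0.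
have le_last : \sum_(u < t.+1) gain g i (D g u) <= \sum_(u < t.+1) gain g i (D g t.+1).
  apply: ler_sum => u _; apply: subset_le_gain; first exact/ltW/Hi_lt_vL.
  exact/Dt_max/ltnW/ltn_ord.
rewrite sumr_const card_ord in le_last.
have : 0 < gain g i (D g t.+1) *+ t.+1 by exact: lt_le_trans le_last.
rewrite pmulrn_lgt0 // => last_gt0.
exact: ltr_wpDr (ltW last_gt0) past_gt0.
Qed.

Lemma Dn_mono : {homo D g : u t / (u <= t)%N >-> u \subset t}.
Proof.
move=> u t; elim: t u => [|t IH] u; first by rewrite leqn0 => /eqP ->.
rewrite leq_eqVlt => /orP [/eqP -> //|lt_ut].
exact: subset_trans (IH u lt_ut) (Dn_subset_succ IH).
Qed.

Lemma sum_gain_past_above t i : strictly_above (D g t) i ->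
  \sum_(u < t.+1) gain g i (D g u) = \sum_(u < t.+1) gain_above g (D g u) (Hi H i).
Proof.
move=> Dt_above; apply: eq_bigr => u _; apply: gain_aboveE => l lDu.
by apply: Dt_above; apply: subsetP (Dn_mono _) _ lDu; rewrite -ltnS.
Qed.

Lemma upper_closed_Dn t : upper_closed (D g t).
Proof.
elim: t => [|t IH] i j; first by rewrite Dn0 inE.
move=> iD le_ji; have [j_top|j_low] := eqVneq (val j.1) 0%N; first exact: mem_Dn_top.
have [jDt|jDt] := boolP (j \in D g t); first exact: subsetP (Dn_mono (leqnSn t)) _ jDt.
have j_above := upper_closed_above IH jDt.
have i_above : strictly_above (D g t) i.
  by move=> l /j_above lt_lj; exact: leq_trans lt_lj le_ji.
move: iD; rewrite !mem_Dn_succ sum_gain_past_above // sum_gain_past_above //.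
have affine c := sum_gain_above_affine g (fun u : 'I_t.+1 => D g u) c.
rewrite (affine (Hi H i)) (affine (Hi H j)) => gain_i_gt0.
apply: affine_gt0_between gain_i_gt0 _ (Hi_le_group le_ji) (Hi_lt_vL j_low).
by rewrite -affine sumr_ge0 // => u _; exact: gain_above_vL_ge0.
Qed.

End Gain.

Lemma Dn_homophily g g' t : 0 < g -> g <= g' -> D g' t \subset D g t.
Proof.
move=> g_gt0 le_gg'; have g'_gt0 := lt_le_trans g_gt0 le_gg'.
elim/ltn_ind: t => -[|t] IH; first by rewrite Dn0 sub0set.
apply/subsetP => i; rewrite mem_Dn_succ => gain'_gt0.
have [i_top|i_low] := eqVneq (val i.1) 0%N; first exact: mem_Dn_top.
have [iD't|iD't] := boolP (i \in D g' t).
  exact: subsetP (Dn_mono g_gt0 (leqnSn t)) _ (subsetP (IH t (ltnSn t)) _ iD't).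
have M_gt0 : (0 < M)%N := leq_ltn_trans (leq0n _) (ltn_ord i.2).
have i_le_vL := ltW (Hi_lt_vL i_low).
have i_above := upper_closed_above (upper_closed_Dn (t := t) g'_gt0) iD't.
have past_above (u : 'I_t.+1) : strictly_above (D g' u) i.
  by move=> l lDu; apply: i_above; apply: subsetP (Dn_mono g'_gt0 _) _ lDu; rewrite -ltnS.
rewrite mem_Dn_succ; apply: lt_le_trans gain'_gt0 _; apply: ler_sum => u _.
apply: le_trans (subset_le_gain g_gt0 i_le_vL (IH u (ltn_ord u))).
by rewrite !(gain_aboveE _ (past_above u)) gain_above_homophily.
Qed.
End Diffusion.

Section Thresholds.
Variables (R : realType) (G M : nat) (H : 'I_G -> R).
Implicit Types X Y : {set indiv G M}.

Definition threshold X : \bar R :=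
  \big[Order.max/-oo%E]_(i | i \notin X) (Hi H i)%:E.

Lemma threshold_neq_pinfty X : threshold X != +oo%E.
Proof. by apply/negbT/lt_eqF/bigmax_ltP; split => // j _; exact: ltry. Qed.

Lemma subset_threshold_ge X Y : X \subset Y -> (threshold Y <= threshold X)%E.
Proof.
move=> subXY; apply/bigmax_leP; split; first exact: leNye.
move=> j jY; apply: le_bigmax_cond; apply: contra jY; exact: (subsetP subXY).
Qed.

Hypothesis H_decr : forall k l : 'I_G, (k < l)%N -> H l < H k.

Lemma upper_closed_threshold X :
  upper_closed X -> X = [set i | (threshold X < (Hi H i)%:E)%E].
Proof.
move=> X_closed; apply/setP => i; rewrite inE.
have [iX|iX] := boolP (i \in X); last first.
  by apply/esym/negbTE; rewrite -leNgt; exact: le_bigmax_cond.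
apply/esym/bigmax_ltP; split; first exact: ltNyr.
by move=> j jX; rewrite lte_fin; apply: H_decr; exact: upper_closed_above X_closed jX i iX.
Qed.

End Thresholds.

Unset Implicit Arguments.

Theorem proposition4 (R : realType) (G M : nat)
  (H : 'I_G -> R) (vL : R) (vH : indiv G M -> R) (sp s gamma : R) :
  (2 <= G)%N ->
  (forall k l : 'I_G, (k < l)%N -> H l < H k) ->
  (forall k : 'I_G, val k = 1%N -> H k < vL) ->
  (forall k : 'I_G, val k = 0%N -> vL < H k) ->
  (forall (i : indiv G M) (k : 'I_G), val k = 0%N -> H k <= vH i) ->
  0 < sp < 1 ->
  0 < s <= 1 ->
  0 < gamma < s^-1 ->
  (exists th : nat -> \bar R,
     (forall t, (1 <= t)%N ->
        th t != +oo%E /\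
        Dn H vL vH sp s gamma t = [set i | (th t < (Hi H i)%:E)%E]) /\
     (forall t, (1 <= t)%N -> (th t.+1 <= th t)%E)) /\
  (forall gamma' : R, gamma < gamma' < s^-1 ->
     forall t, (1 <= t)%N ->
       Dn H vL vH sp s gamma' t \subset Dn H vL vH sp s gamma t).
Proof.
move=> two_le_G H_decr H1_lt_vL vL_lt_H0 H0_le_vH /andP[_ sp_lt1] /andP[s_gt0 _].
move=> /andP[gamma_gt0 _].
have Dn_mono_gamma :=
  Dn_mono two_le_G H_decr H1_lt_vL vL_lt_H0 H0_le_vH sp_lt1 s_gt0 gamma_gt0.
have closed_gamma :=
  upper_closed_Dn two_le_G H_decr H1_lt_vL vL_lt_H0 H0_le_vH sp_lt1 s_gt0 gamma_gt0.
split.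
  exists (fun t => threshold H (Dn H vL vH sp s gamma t)); split => t _.
    by split; [exact: threshold_neq_pinfty | exact: upper_closed_threshold].
  exact/subset_threshold_ge/Dn_mono_gamma.
move=> gamma' /andP[lt_gamma _] t _.
exact: Dn_homophily two_le_G H_decr H1_lt_vL vL_lt_H0 H0_le_vH sp_lt1 s_gt0
  _ _ t gamma_gt0 (ltW lt_gamma).
Qed.
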